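(* Let $X$ be a $T_0$-space such that for every nonempty closed set $C\neq X$ and every $K\in K(X)$, the set $\max(C)$ of maximal elements of $C$ (in the specialization order) is nonempty and ${\downarrow}(C\cap K)$ is closed. Then $X$ is $S^{\ast}$-well-filtered.
   Context: All spaces are $T_0$. The specialization order of $X$ is given by $x\le y$ iff $x\in cl(\{y\})$; ${\uparrow},{\downarrow}$ are taken with respect to it; a subset is saturated if it is an upper set in the specialization order. $K(X)$ denotes the set of all nonempty compact saturated subsets of $X$; a family in $K(X)$ is filtered if any two members contain a common member. $X$ is $S^{\ast}$-well-filtered if for every filtered family $\{K_i\mid i\in I\}\subseteq K(X)$, every $G\in K(X)$ and every nonempty open $U$, $\bigcap_{i\in I}K_i\cap G\subseteq U$ implies $K_i\cap G\subseteq U$ for some $i$. *)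

From HB Require Import structures.
From mathcomp Require Import all_boot all_order.
From mathcomp Require Import all_classical all_reals all_analysis.
Set Implicit Arguments. Unset Strict Implicit. Unset Printing Implicit Defensive.
Local Open Scope classical_set_scope.

Section Spec.
Context {X : topologicalType}.

Definition spec_le (x y : X) : Prop := closure [set y] x.

Definition down_set (A : set X) : set X := [set x | exists2 y, A y & spec_le x y].

Definition saturated (A : set X) : Prop :=
  forall x y, A x -> spec_le x y -> A y.

Definition KX (K : set X) : Prop := K !=set0 /\ compact K /\ saturated K.

Definition max_elems (C : set X) : set X :=
  [set x | C x /\ forall y, C y -> spec_le x y -> y = x].

Definition filtered_KX (I : Type) (K : I -> set X) : Prop :=
  inhabited I /\ (forall i, KX (K i)) /\
  (forall i j, exists k, K k `<=` K i /\ K k `<=` K j).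

Definition S_star_well_filtered : Prop :=
  forall (I : Type) (K : I -> set X), filtered_KX K ->
  forall G : set X, KX G ->
  forall U : set X, open U -> U !=set0 ->
  (\bigcap_(i in setT) K i) `&` G `<=` U ->
  exists i, K i `&` G `<=` U.

End Spec.
Arguments S_star_well_filtered : clear implicits.

From HB Require Import structures.
From mathcomp Require Import all_boot all_order.
From mathcomp Require Import all_classical all_reals all_analysis.
Set Implicit Arguments. Unset Strict Implicit. Unset Printing Implicit Defensive.
Local Open Scope classical_set_scope.

(* The set E = down_set (~` U `&` G) is
   closed by hypothesis and misses U and, the K_i being saturated, also
   \bigcap K_i; so it suffices that X is well-filtered for the open ~` E. *)

Section SpecializationOrder.
Context {X : topologicalType}.

Lemma spec_le_refl (x : X) : spec_le x x.
Proof. exact: subset_closure. Qed.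

Lemma closed_down (A : set X) : closed A -> down_set A `<=` A.
Proof.
by move=> cA x [y Ay xy]; apply: cA; apply: (closureS _ xy) => z ->.
Qed.

Lemma open_saturated (U : set X) : open U -> saturated U.
Proof.
move=> oU x y Ux xy.
by have [z [-> Uz]] := xy U (open_nbhs_nbhs (conj oU Ux)).
Qed.

Lemma down_setS (A B : set X) : A `<=` B -> down_set A `<=` down_set B.
Proof. by move=> AB x [y Ay xy]; exists y => //; exact: AB. Qed.

Lemma max_elems_down_setI (A B : set X) (m : X) :
  max_elems A m -> down_set (A `&` B) m -> B m.
Proof. by move=> [_ mmax] [y [Ay By] my]; rewrite -(mmax y Ay my). Qed.

End SpecializationOrder.

Definition meets_all {X : topologicalType} {I : Type} (K : I -> set X)
  (A : set X) :=
  forall i, A `&` K i !=set0.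

Section CompactChains.
Context {X : topologicalType}.

Lemma compact_meets_bigcap (K : set X) (I : Type) (F : set I) (B : I -> set X) :
  compact K -> F !=set0 -> (forall i, F i -> closed (B i)) ->
  (forall i j, F i -> F j -> exists2 k, F k & B k `<=` B i `&` B j) ->
  (forall i, F i -> B i `&` K !=set0) ->
  (\bigcap_(i in F) B i) `&` K !=set0.
Proof.
move=> cK [i0 Fi0] clB dirB meetK.
pose BK i := B i `&` K.
have BKfilter : ProperFilter (filter_from F BK).
  apply: filter_from_proper => //; apply: filter_from_filter; first by exists i0.
  move=> i j Fi Fj; have [k Fk Bk] := dirB i j Fi Fj.
  by exists k => // x [/Bk [Bix Bjx] Kx].
have [p [Kp clp]] := cK _ BKfilter (ex_intro2 _ _ i0 Fi0 (fun x => @proj2 _ _)).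
exists p; split => // i Fi; apply: (clB i Fi) => N Np.
have [x [[Bix _] Nx]] := clp (BK i) N (ex_intro2 _ _ i Fi (fun x h => h)) Np.
by exists x.
Qed.

Context {I : Type} {K : I -> set X}.

(* Zorn's lemma is applied to the opens [O] with [C `\` O] meeting every
   [K i]: the union of a chain of them is again such an open by compactness. *)
Lemma minimal_closed_meets_all (C : set X) :
  (forall i, compact (K i)) -> closed C -> meets_all K C ->
  exists2 A, [/\ closed A, A `<=` C & meets_all K A] &
  forall B, closed B -> B `<=` A -> meets_all K B -> A `<=` B.
Proof.
move=> compactK cC meetC.
pose P O := open O /\ meets_all K (C `\` O).
have [|O [[oO meetO] Omax]] := @Zorn_bigcup X P.
  move=> F FP Ftot; split; first by apply: bigcup_open => W /FP[].
  have [->|/set0P FN0 i] := eqVneq F set0.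
    by rewrite bigcup_set0 setD0.
  have := compact_meets_bigcap (B := fun W => C `\` W) (compactK i) FN0.
  rewrite setDE setC_bigcup -bigcapIr //; apply.
  - by move=> W /FP[oW _]; apply: closedI => //; exact: open_closedC.
  - move=> W1 W2 F1 F2; have [W12|W21] := Ftot W1 W2 F1 F2.
      by exists W2 => // x [Cx W2x]; split; split => // W1x; exact/W2x/W12.
    by exists W1 => // x [Cx W1x]; split; split => // W2x; exact/W1x/W21.
  - by move=> W /FP[_]; apply.
exists (C `\` O).
  by split; [apply: closedI => //; exact: open_closedC|exact: subDsetl|].
move=> B cB BA meetB.
apply: contrapT => /existsNP[a /not_implyP[[_ nOa] nBa]].
apply: (Omax (O `|` ~` B)).
  by split; [exact: subsetUl|move/(_ a (or_intror nBa))].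
split; first by apply: openU => //; exact: closed_openC.
move=> i; have [x [Bx Kx]] := meetB i; have [Cx nOx] := BA x Bx.
by exists x; split => //; split => // -[].
Qed.

Lemma minimal_closed_sub_down (A : set X) (i : I) :
  (forall i j, exists k, K k `<=` K i /\ K k `<=` K j) ->
  closed A -> meets_all K A ->
  (forall B, closed B -> B `<=` A -> meets_all K B -> A `<=` B) ->
  closed (down_set (A `&` K i)) -> A `<=` down_set (A `&` K i).
Proof.
move=> dirK cA meetA Amin cD; apply: Amin => //.
  by apply: subset_trans (closed_down cA); apply: down_setS; exact: subIsetl.
move=> j; have [k [ki kj]] := dirK i j; have [y [Ay Ky]] := meetA k.
exists y; split; last exact: kj.
by exists y; [split => //; exact: ki|exact: spec_le_refl].
Qed.

End CompactChains.

Section WellFiltered.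
Context {X : topologicalType}.
Hypothesis max_down : forall C : set X, closed C -> C !=set0 -> C <> setT ->
  max_elems C !=set0 /\ (forall K : set X, KX K -> closed (down_set (C `&` K))).

Lemma filtered_KX_sub_open (I : Type) (K : I -> set X) : filtered_KX K ->
  forall V : set X, open V -> V !=set0 ->
  \bigcap_(i in setT) K i `<=` V -> exists i, K i `<=` V.
Proof.
move=> [[i0] [KK dirK]] V oV [v Vv] capV.
apply: contrapT => /forallNP nK.
have meetCV : meets_all K (~` V).
  by move=> i; apply/set0P/eqP; rewrite setIC -subsets_disjoint; exact: nK.
have [A [cA AV meetA] Amin] :=
  minimal_closed_meets_all (fun i => (KK i).2.1) (open_closedC oV) meetCV.
have A0 : A !=set0 by have [x [Ax _]] := meetA i0; exists x.
have AT : A <> setT by move=> AT; apply: (AV v) => //; rewrite AT.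
have [[m Am] cD] := max_down cA A0 AT.
have mK i : K i m.
  have AD := minimal_closed_sub_down dirK cA meetA Amin (cD _ (KK i)).
  exact: max_elems_down_setI Am (AD m Am.1).
exact: AV m Am.1 (capV m (fun i _ => mK i)).
Qed.

End WellFiltered.

Theorem mainTheorem10 (X : topologicalType) :
  kolmogorov_space X ->
  (forall C : set X, closed C -> C !=set0 -> C <> setT ->
     max_elems C !=set0 /\
     (forall K : set X, KX K -> closed (down_set (C `&` K)))) ->
  S_star_well_filtered X.
Proof.
move=> _ max_down I K Kf G KG U oU [u Uu] capU.
have [UC0|/set0P UCN0] := eqVneq (~` U) set0.
  by case: Kf => [[i] _]; exists i => x _; rewrite -(setCK U) UC0 setC0.
pose E := down_set (~` U `&` G).
have cE : closed E.
  have UCT : ~` U <> setT.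
    by move=> UCT; have := Uu; rewrite -(setCK U) UCT setCT.
  exact: (max_down _ (open_closedC oU) UCN0 UCT).2 G KG.
have UE : U `<=` ~` E.
  by move=> x Ux [y [nUy _] xy]; exact/nUy/(open_saturated oU Ux xy).
have capE : \bigcap_(i in setT) K i `<=` ~` E.
  move=> k Kk [g [nUg Gg] kg]; apply/nUg/capU; split => // j _.
  exact: (Kf.2.1 j).2.2 k g (Kk j Logic.I) kg.
have [i KiE] := filtered_KX_sub_open max_down Kf (closed_openC cE)
  (ex_intro _ u (UE u Uu)) capE.
exists i => x [Kx Gx]; apply: contrapT => nUx.
by apply: (KiE x Kx); exists x => //; exact: spec_le_refl.
Qed.
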